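(* In the robustified SAFFRON construction, let right node $k$ be a singleton whose defective item is $\ell$. Then the probability that the robust singleton rule at node $k$ fails to declare $\ell$ is at most $3n^{-\zeta}$, and the probability that it declares an item different from $\ell$ is at most $n^{-(2+\zeta)}$.
   Context: Items are indexed by $[n]$, $n=2^L$; exactly $K$ items are defective. $b_\ell\in\{0,1\}^L$ is the $L$-bit binary representation of $\ell-1$; $\overline{v}$ is the bitwise complement. Noise model: each test outcome is flipped independently with probability $q\in(0,1/2)$, i.e. the observed outcome vector is $y=A\odot x+w$ (addition mod 2), where $A\odot x$ is the vector of noiseless (Boolean OR) test outcomes and $w$ has i.i.d. Bernoulli$(q)$ entries. Assume an error-correcting code of rate $R$ with encoder $f:\{0,1\}^L\to\{0,1\}^{L/R}$ and decoder $g:\{0,1\}^{L/R}\to\{0,1\}^L$ such that for every $b\in\{0,1\}^L$, $\Pr(g(f(b)+w')\neq b)\le2^{-\zeta L}=n^{-\zeta}$ when $w'$ has i.i.d. Bernoulli$(q)$ entries, for a constant $\zeta>0$. Sequences $s_1=(i_1,\dots,i_n)$, $s_2=(j_1,\dots,j_n)$ are drawn independently and uniformly from $[n]^n$. Robustified signature of item $\ell$: $u_\ell=(f(b_\ell);\overline{f(b_\ell)};f(b_{i_\ell});\overline{f(b_{i_\ell})};f(b_{j_\ell});\overline{f(b_{j_\ell})})\in\{0,1\}^{6L/R}$. A bipartite graph with incidence matrix $T$ connects items to $M$ right nodes; for right node $k$ there are $6L/R$ tests, the $r$-th pooling items $\ell$ with $T_{k\ell}=1$ and $(u_\ell)_r=1$,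 so the observed measurement vector is $z_k=\bigvee_{\ell:T_{k\ell}x_\ell=1}u_\ell+w_k$ with $w_k$ i.i.d. Bernoulli$(q)$, split into six sections $z_k^1,\dots,z_k^6$ of length $L/R$. A right node is a singleton if connected to exactly one defective item. Robust singleton rule at node $k$: let $\ell_1,\ell_2,\ell_3$ be the indices with $b_{\ell_1}=g(z_k^1)$, $b_{\ell_2}=g(z_k^3)$, $b_{\ell_3}=g(z_k^5)$; if $i_{\ell_1}=\ell_2$ and $j_{\ell_1}=\ell_3$, declare item $\ell_1$ defective. Probabilities are over the noise and over $s_1,s_2$. *)

From HB Require Import structures.
From Stdlib Require Import Reals.
From mathcomp Require Import all_boot.
Set Implicit Arguments. Unset Strict Implicit. Unset Printing Implicit Defensive.

Local Open Scope R_scope.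

Lemma Rplus_assoc' : associative Rplus.
Proof. by move=> x y z; rewrite Rplus_assoc. Qed.
Lemma Rmult_assoc' : associative Rmult.
Proof. by move=> x y z; rewrite Rmult_assoc. Qed.
HB.instance Definition _ := Monoid.isComLaw.Build R 0 Rplus Rplus_assoc' Rplus_comm Rplus_0_l.
HB.instance Definition _ := Monoid.isComLaw.Build R 1 Rmult Rmult_assoc' Rmult_comm Rmult_1_l.

Definition prob (Omega : finType) (wt : Omega -> R) (E : pred Omega) : R :=
  \big[Rplus/0]_(o : Omega) (if E o then wt o else 0).

Definition bern_weight (q : R) (m : nat) (w : m.-tuple bool) : R :=
  \big[Rmult/1]_(j < m) (if tnth w j then q else 1 - q).

Definition xorv (m : nat) (a b : m.-tuple bool) : m.-tuple bool :=
  [tuple (tnth a j (+) tnth b j) | j < m].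
Definition complv (m : nat) (a : m.-tuple bool) : m.-tuple bool :=
  [tuple ~~ tnth a j | j < m].

Definition bits (L : nat) (l : 'I_(2 ^ L)) : L.-tuple bool :=
  [tuple odd (l %/ 2 ^ j) | j < L].

(* The index whose binary representation is v (None cannot occur). *)
Definition idx_of (L : nat) (v : L.-tuple bool) : option 'I_(2 ^ L) :=
  [pick l | bits l == v].

(* A sample: noise on the 6 sections of node k, and the sequences s1, s2. *)
Definition sample (L m : nat) : finType :=
  ({ffun 'I_6 -> m.-tuple bool} * {ffun 'I_(2 ^ L) -> 'I_(2 ^ L)}
     * {ffun 'I_(2 ^ L) -> 'I_(2 ^ L)})%type.

Definition sample_weight (L m : nat) (q : R) (o : sample L m) : R :=
  let: (w, s1, s2) := o in
  (\big[Rmult/1]_(s < 6) bern_weight q (w s))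
  * (/ INR (2 ^ L)%nat) ^ (2 ^ L)%nat * (/ INR (2 ^ L)%nat) ^ (2 ^ L)%nat.

(* Robustified signature u_l, split into its six sections of length m. *)
Definition signature (L m : nat) (f : L.-tuple bool -> m.-tuple bool)
  (s1 s2 : {ffun 'I_(2 ^ L) -> 'I_(2 ^ L)}) (l : 'I_(2 ^ L)) (s : 'I_6)
  : m.-tuple bool :=
  match val s with
  | 0%N => f (bits l)
  | 1%N => complv (f (bits l))
  | 2%N => f (bits (s1 l))
  | 3%N => complv (f (bits (s1 l)))
  | 4%N => f (bits (s2 l))
  | _ => complv (f (bits (s2 l)))
  end.

Definition measurement (L m M : nat) (f : L.-tuple bool -> m.-tuple bool)
  (T : 'I_M -> 'I_(2 ^ L) -> bool) (x : {set 'I_(2 ^ L)}) (k : 'I_M)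
  (o : sample L m) (s : 'I_6) : m.-tuple bool :=
  let: (w, s1, s2) := o in
  xorv [tuple [exists l, [&& T k l, l \in x & tnth (signature f s1 s2 l s) j]] | j < m]
       (w s).

Definition robust_rule (L m M : nat) (f : L.-tuple bool -> m.-tuple bool)
  (g : m.-tuple bool -> L.-tuple bool)
  (T : 'I_M -> 'I_(2 ^ L) -> bool) (x : {set 'I_(2 ^ L)}) (k : 'I_M)
  (o : sample L m) : option 'I_(2 ^ L) :=
  let z := measurement f T x k o in
  let: (_, s1, s2) := o in
  match idx_of (g (z (@inord 5 0))), idx_of (g (z (@inord 5 2))),
        idx_of (g (z (@inord 5 4))) with
  | Some l1, Some l2, Some l3 =>
      if (s1 l1 == l2) && (s2 l1 == l3) then Some l1 else None
  | _, _, _ => None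
  end.

(* At a singleton node the three decoded sections are the noisy encodings of l, i_l and
   j_l, each decoded wrongly with probability at most n^-zeta whatever s1 and s2 are; the
   rule can only miss l if one of them fails, whence 3 n^-zeta by a union bound.
   Declaring some l1 <> l requires the first section to be decoded as l1, an event of
   probability at most n^-zeta, and then i_l1 and j_l1 to coincide with the indices decoded
   from the third and fifth sections.  Those indices depend only on the noise and on i_l,
   j_l, which are uniform and independent of i_l1, j_l1 because l1 <> l; so each
   coincidence has probability at most 1/n, and the two are independent. *)

From HB Require Import structures.
From Stdlib Require Import Reals Lra.
From mathcomp Require Import all_boot.
Set Implicit Arguments. Unset Strict Implicit. Unset Printing Implicit Defensive.
Local Open Scope R_scope.

HB.instance Definition _ := Monoid.isMulLaw.Build R 0 Rmult Rmult_0_l Rmult_0_r.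
HB.instance Definition _ :=
  Monoid.isAddLaw.Build R Rmult Rplus Rmult_plus_distr_r Rmult_plus_distr_l.

Local Notation "\sum_ ( i : t ) F" := (\big[Rplus/0]_(i : t) F%R) : R_scope.
Local Notation "\prod_ ( i : t ) F" := (\big[Rmult/1]_(i : t) F%R) : R_scope.

Lemma sumR_le (I : finType) (F G : I -> R) :
  (forall i, F i <= G i) -> \sum_(i : I) F i <= \sum_(i : I) G i.
Proof. by move=> FG; apply: (big_ind2 Rle) => // *; lra. Qed.

Lemma prodR_ge0 (I : finType) (F : I -> R) :
  (forall i, 0 <= F i) -> 0 <= \prod_(i : I) F i.
Proof. by move=> F0; apply: (big_ind (Rle 0)) => // *; nra. Qed.

Lemma sumR_const_ord (n : nat) (c : R) : \sum_(i : 'I_n) c = INR n * c.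
Proof. by rewrite big_const_ord; elim: n => [|n IH]; rewrite ?S_INR /= ?IH; ring. Qed.

Lemma prodR_const_ord (n : nat) (c : R) : \prod_(i : 'I_n) c = c ^ n.
Proof. by rewrite big_const_ord; elim: n => //= n ->. Qed.

Section Probability.
Variables (Omega : finType) (wt : Omega -> R).

Lemma eq_prob (E E' : pred Omega) : E =1 E' -> prob wt E = prob wt E'.
Proof. by move=> EE'; apply: eq_bigr => o _; rewrite EE'. Qed.

Lemma prob_pred1 (o0 : Omega) : prob wt (pred1 o0) = wt o0.
Proof.
by rewrite /prob (bigD1 o0) //= eqxx big1 ?Rplus_0_r // => o /negbTE ->.
Qed.

Lemma prob_by_value (Y : finType) (h : Omega -> Y) (E : pred Omega) :
  prob wt E = \sum_(y : Y) prob wt (fun o => (h o == y) && E o).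
Proof.
rewrite /prob exchange_big; apply: eq_bigr => o _.
rewrite (bigD1 (h o)) //= eqxx big1 ?Rplus_0_r // => y /negbTE.
by rewrite eq_sym => ->.
Qed.

Lemma eq_prob_weight (wt' : Omega -> R) (E : pred Omega) :
  wt =1 wt' -> prob wt E = prob wt' E.
Proof. by move=> ww'; apply: eq_bigr => o _; rewrite ww'. Qed.

Hypothesis wt_ge0 : forall o, 0 <= wt o.

Lemma le_prob (E E' : pred Omega) :
  (forall o, E o -> E' o) -> prob wt E <= prob wt E'.
Proof.
move=> EE'; apply: sumR_le => o; have := wt_ge0 o.
by case Eo: (E o); [rewrite (EE' o Eo) | case: (E' o)]; lra.
Qed.

Lemma prob_orb (E1 E2 : pred Omega) :
  prob wt (fun o => E1 o || E2 o) <= prob wt E1 + prob wt E2.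
Proof.
rewrite /prob -big_split /=; apply: sumR_le => o; have := wt_ge0 o.
by case: (E1 o); case: (E2 o) => /=; lra.
Qed.

End Probability.

Definition pair_weight (A B : finType) (wa : A -> R) (wb : B -> R) (p : A * B) : R :=
  wa p.1 * wb p.2.

Section PairProbability.
Variables (A B : finType) (wa : A -> R) (wb : B -> R).

Lemma prob_pair (E : pred (A * B)) :
  prob (pair_weight wa wb) E = \sum_(a : A) wa a * prob wb (fun b => E (a, b)).
Proof.
pose G a b := if E (a, b) then wa a * wb b else 0.
rewrite /prob (eq_bigr (fun p => G p.1 p.2)); last by case.
rewrite -pair_bigA.
apply: eq_bigr => a _; rewrite big_distrr; apply: eq_bigr => b _ /=.
by rewrite /G; case: ifP => _; ring.
Qed.

Lemma prob_pairC (E : pred (A * B)) :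
  prob (pair_weight wa wb) E = prob (pair_weight wb wa) (fun p => E (p.2, p.1)).
Proof.
rewrite /prob (reindex (fun p : B * A => (p.2, p.1))) /=; last first.
  by apply: onW_bij; exists (fun p : A * B => (p.2, p.1)) => -[].
by apply: eq_bigr => -[b a] _; rewrite /pair_weight /= Rmult_comm.
Qed.

Lemma prob_pair_fst (E : pred A) :
  prob wb xpredT = 1 -> prob (pair_weight wa wb) (fun p => E p.1) = prob wa E.
Proof.
move=> wb1; rewrite prob_pair; apply: eq_bigr => a _ /=.
case: (E a); first by rewrite wb1 Rmult_1_r.
by rewrite /prob big1 ?Rmult_0_r.
Qed.

Lemma prob_pair_le (E : pred (A * B)) (Ea : pred A) (c : R) :
  (forall a, 0 <= wa a) ->
  (forall a, prob wb (fun b => E (a, b)) <= if Ea a then c else 0) ->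
  prob (pair_weight wa wb) E <= c * prob wa Ea.
Proof.
move=> wa_ge0 Ebound; rewrite prob_pair [prob wa Ea]/prob big_distrr.
by apply: sumR_le => a /=; have := wa_ge0 a; have := Ebound a; case: (Ea a); nra.
Qed.

End PairProbability.

Definition ffun_weight (I J : finType) (F : J -> R) (f : {ffun I -> J}) : R :=
  \prod_(i : I) F (f i).

Section FfunProbability.
Variables (I J : finType) (F : J -> R).

Lemma prob_ffun_forall (Q : I -> pred J) :
  prob (ffun_weight F) (fun f => [forall i, Q i (f i)])
  = \prod_(i : I) prob F (Q i).
Proof.
rewrite /prob bigA_distr_bigA; apply: eq_bigr => f _.
case: ifP => [/forallP Qf | /negbT/forallPn [i nQfi]].
  by apply: eq_bigr => i _; rewrite Qf.
by rewrite (bigD1 i) //= (negbTE nQfi) Rmult_0_l.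
Qed.

Hypothesis F_total : prob F xpredT = 1.

Lemma prob_ffun_total : prob (ffun_weight (I := I) F) xpredT = 1.
Proof.
transitivity (prob (ffun_weight F) (fun f : {ffun I -> J} => [forall i, xpredT (f i)])).
  by apply: eq_prob => f; apply/esym/forallP.
by rewrite (prob_ffun_forall (fun _ : I => xpredT)) big1.
Qed.

Lemma prob_ffun_app (i0 : I) (P : pred J) :
  prob (ffun_weight F) (fun f => P (f i0)) = prob F P.
Proof.
pose Q i := if i == i0 then P else xpredT.
transitivity (prob (ffun_weight F) (fun f : {ffun I -> J} => [forall i, Q i (f i)])).
  apply: eq_prob => f; apply/idP/forallP => [Pf i | /(_ i0)]; last by rewrite /Q eqxx.
  by rewrite /Q; case: eqP => // ->.
by rewrite prob_ffun_forall (bigD1 i0) //= /Q eqxx big1 ?Rmult_1_r // => i /negbTE ->.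
Qed.

Lemma prob_ffun_app2 (i0 i1 : I) (P : J -> pred J) : i0 != i1 ->
  prob (ffun_weight F) (fun f => P (f i0) (f i1)) = \sum_(y : J) F y * prob F (P y).
Proof.
move=> i01; have i10 : (i1 == i0) = false by rewrite eq_sym (negbTE i01).
rewrite (prob_by_value _ (fun f : {ffun I -> J} => f i0)); apply: eq_bigr => y _.
pose Q i : pred J := if i == i0 then xpred1 y else if i == i1 then P y else xpredT.
transitivity (prob (ffun_weight F) (fun f : {ffun I -> J} => [forall i, Q i (f i)])).
  apply: eq_prob => f; apply/andP/forallP => [[/eqP fy Pf] i | Qf]; last first.
    by have := Qf i1; have := Qf i0; rewrite /Q i10 !eqxx /= => /eqP ->.
  rewrite /Q; case: eqP => [-> | _]; first by rewrite fy.
  by case: eqP => [-> | _]; rewrite -?fy.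
rewrite prob_ffun_forall (bigD1 i0) //= (bigD1 i1) 1?eq_sym //= /Q i10 !eqxx.
by rewrite prob_pred1 big1 ?Rmult_1_r // => i /andP [/negbTE -> /negbTE ->].
Qed.

End FfunProbability.

Section Bernoulli.
Variables (q : R) (m : nat).

Lemma bern_weight_ge0 (w : m.-tuple bool) : 0 <= q <= 1 -> 0 <= bern_weight q w.
Proof. by move=> q01; apply: prodR_ge0 => j; case: (tnth w j); lra. Qed.

Lemma prob_bern_total : prob (@bern_weight q m) xpredT = 1.
Proof.
pose bit b := if b then q else 1 - q.
have bit_total : prob bit xpredT = 1 by rewrite /prob big_bool /bit /=; lra.
rewrite -(prob_ffun_total 'I_m bit_total) /prob.
rewrite (reindex (fun f : {ffun 'I_m -> bool} => [tuple f j | j < m])) /=; last first.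
  apply: onW_bij; exists (fun t => [ffun j => tnth t j]) => [f | t].
    by apply/ffunP => j; rewrite ffunE tnth_mktuple.
  by apply: eq_from_tnth => j; rewrite tnth_mktuple ffunE.
by apply: eq_bigr => f _; apply: eq_bigr => j _; rewrite tnth_mktuple.
Qed.

End Bernoulli.

Definition unif (n : nat) (i : 'I_n) : R := / INR n.

Section Uniform.
Variable n : nat.
Hypothesis n_gt0 : (0 < n)%N.

Let INR_n_gt0 : 0 < INR n. Proof. exact/lt_0_INR/ltP. Qed.

Lemma unif_gt0 (i : 'I_n) : 0 < unif i.
Proof. exact: Rinv_0_lt_compat. Qed.

Lemma prob_unif_total : prob (@unif n) xpredT = 1.
Proof. by rewrite /prob sumR_const_ord /unif; apply: Rinv_r; lra. Qed.

Lemma prob_unif_hit (a : option 'I_n) : prob (@unif n) (fun z => Some z == a) <= / INR n.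
Proof.
case: a => [z0|]; last by rewrite /prob big1 //; exact/Rlt_le/Rinv_0_lt_compat.
have -> : prob (@unif n) (fun z => Some z == Some z0) = prob (@unif n) (pred1 z0).
  by apply: eq_prob => z; rewrite /= (inj_eq (@Some_inj _)).
by rewrite prob_pred1; exact: Rle_refl.
Qed.

Lemma prob_unif_collision (I : finType) (i0 i1 : I) (A : 'I_n -> option 'I_n) :
  i0 != i1 ->
  prob (ffun_weight (@unif n)) (fun s => Some (s i1) == A (s i0)) <= / INR n.
Proof.
move=> i01; rewrite (prob_ffun_app2 prob_unif_total (fun y z => Some z == A y) i01).
apply: Rle_trans (_ : \sum_(y : 'I_n) unif y * / INR n <= _).
  apply: sumR_le => y; apply: Rmult_le_compat_l (prob_unif_hit _).
  exact/Rlt_le/unif_gt0.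
rewrite /unif sumR_const_ord -Rmult_assoc Rinv_r ?Rmult_1_l; [exact: Rle_refl | lra].
Qed.

Lemma prob_unif_unique_hit (I : finType) (i0 : I) (C : pred I) (A : 'I_n -> option 'I_n) :
  (forall i i', C i -> C i' -> i = i') -> ~~ C i0 ->
  prob (ffun_weight (@unif n)) (fun s => [exists i, C i && (Some (s i) == A (s i0))])
  <= if [exists i, C i] then / INR n else 0.
Proof.
move=> C_uniq C_i0; case: existsP => [[i1 Ci1] | noC] /=.
  apply: Rle_trans (prob_unif_collision A (_ : i0 != i1)); last first.
    by apply: contraNneq C_i0 => ->.
  apply: le_prob => [s | s /existsP [i /andP [Ci hit]]].
    by apply: prodR_ge0 => i; exact/Rlt_le/unif_gt0.
  by rewrite -(C_uniq _ _ Ci Ci1).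
rewrite /prob big1 => [|s _]; first exact: Rle_refl.
by case: existsP => // -[i /andP [Ci _]]; case: noC; exists i.
Qed.

End Uniform.

Lemma binary_digits_inj (L a b : nat) : (a < 2 ^ L)%N -> (b < 2 ^ L)%N ->
  (forall j, (j < L)%N -> odd (a %/ 2 ^ j) = odd (b %/ 2 ^ j)) -> a = b.
Proof.
elim: L a b => [|L IH] a b; first by rewrite expn0 !ltnS !leqn0 => /eqP -> /eqP ->.
move=> a_lt b_lt same_digits; have := same_digits 0%N isT; rewrite expn0 !divn1 => same_odd.
have half_eq : a %/ 2 = b %/ 2.
  apply: IH; rewrite ?ltn_divLR -?expnSr // => j j_lt.
  by rewrite -!divnMA -expnS; exact: same_digits.
by rewrite (divn_eq a 2) (divn_eq b 2) half_eq !modn2 same_odd.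
Qed.

Lemma bits_inj (L : nat) : injective (@bits L).
Proof.
move=> a b ab; apply/val_inj/(binary_digits_inj (ltn_ord a) (ltn_ord b)) => j j_lt.
by have := congr1 (fun t => tnth t (Ordinal j_lt)) ab; rewrite !tnth_mktuple.
Qed.

Lemma idx_of_bits (L : nat) (l : 'I_(2 ^ L)) : idx_of (bits l) = Some l.
Proof. by rewrite /idx_of; case: pickP => [l' /eqP /bits_inj -> // | /(_ l)]; rewrite eqxx. Qed.

Definition decoded (L m : nat) (f : L.-tuple bool -> m.-tuple bool)
  (g : m.-tuple bool -> L.-tuple bool) (b : L.-tuple bool) (t : m.-tuple bool) :=
  idx_of (g (xorv (f b) t)).

Section SingletonNode.
Variables (L m M : nat) (f : L.-tuple bool -> m.-tuple bool).
Variables (g : m.-tuple bool -> L.-tuple bool) (T : 'I_M -> 'I_(2 ^ L) -> bool).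
Variables (x : {set 'I_(2 ^ L)}) (k : 'I_M) (l : 'I_(2 ^ L)).
Hypothesis singleton : [set l' in x | T k l'] = [set l].
Variables (w : {ffun 'I_6 -> m.-tuple bool}) (s1 s2 : {ffun 'I_(2 ^ L) -> 'I_(2 ^ L)}).

Lemma measurement_singleton (s : 'I_6) :
  measurement f T x k (w, s1, s2) s = xorv (signature f s1 s2 l s) (w s).
Proof.
have defective_at l' : (l' \in x) && T k l' = (l' == l).
  by rewrite -in_set1 -singleton inE.
congr xorv; apply: eq_from_tnth => j; rewrite tnth_mktuple.
apply/existsP/idP => [[l' /and3P [Tl' xl' ul']] | ul].
  by move: (defective_at l'); rewrite xl' Tl' => /esym/eqP <-.
by exists l; have := defective_at l; rewrite eqxx => /andP [-> ->]; rewrite ul.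
Qed.

Let val_inord6 j : (j < 6)%N -> \val (@inord 5 j) = j.
Proof. exact: inordK. Qed.

Lemma robust_rule_correct :
  g (xorv (f (bits l)) (w (inord 0))) = bits l ->
  g (xorv (f (bits (s1 l))) (w (inord 2))) = bits (s1 l) ->
  g (xorv (f (bits (s2 l))) (w (inord 4))) = bits (s2 l) ->
  robust_rule f g T x k (w, s1, s2) = Some l.
Proof.
move=> ok0 ok2 ok4; rewrite /robust_rule !measurement_singleton /signature !val_inord6 //.
by rewrite ok0 ok2 ok4 !idx_of_bits !eqxx.
Qed.

Lemma robust_rule_Some (l1 : 'I_(2 ^ L)) : robust_rule f g T x k (w, s1, s2) = Some l1 ->
  [/\ decoded f g (bits l) (w (inord 0)) = Some l1,
      decoded f g (bits (s1 l)) (w (inord 2)) = Some (s1 l1)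
    & decoded f g (bits (s2 l)) (w (inord 4)) = Some (s2 l1)].
Proof.
rewrite /robust_rule !measurement_singleton /signature !val_inord6 // /decoded.
case: idx_of => [a|] //; case: idx_of => [b|] //; case: idx_of => [c|] //.
by case: ifP => // /andP [/eqP <- /eqP <-] [<-].
Qed.

End SingletonNode.

Section RobustSingletonRule.
Variables (L m M : nat) (q eps : R) (f : L.-tuple bool -> m.-tuple bool).
Variables (g : m.-tuple bool -> L.-tuple bool) (T : 'I_M -> 'I_(2 ^ L) -> bool).
Variables (x : {set 'I_(2 ^ L)}) (k : 'I_M) (l : 'I_(2 ^ L)).
Hypothesis q_range : 0 < q < / 2.
Hypothesis singleton : [set l' in x | T k l'] = [set l].
Hypothesis decoding_error :
  forall b, prob (@bern_weight q m) (fun t => g (xorv (f b) t) != b) <= eps.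

Local Notation noise_vector := {ffun 'I_6 -> m.-tuple bool}.
Local Notation index_map := {ffun 'I_(2 ^ L) -> 'I_(2 ^ L)}.
Local Notation outcome := (noise_vector * index_map * index_map)%type.
Local Notation noise := (ffun_weight (I := 'I_6) (@bern_weight q m)).
Local Notation uniform_map := (ffun_weight (I := 'I_(2 ^ L)) (@unif (2 ^ L))).

Let n_gt0 : (0 < 2 ^ L)%N. Proof. by rewrite expn_gt0. Qed.

Let inv_n_ge0 : 0 <= / INR (2 ^ L).
Proof. exact/Rlt_le/Rinv_0_lt_compat/lt_0_INR/ltP. Qed.

Let noise_ge0 w : 0 <= noise w.
Proof. by apply: prodR_ge0 => s; apply: bern_weight_ge0; lra. Qed.

Let uniform_map_ge0 s : 0 <= uniform_map s.
Proof. by apply: prodR_ge0 => i; exact/Rlt_le/unif_gt0. Qed.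

Let uniform_map_total : prob uniform_map xpredT = 1.
Proof. exact/prob_ffun_total/prob_unif_total. Qed.

Local Notation sample_law := (pair_weight (pair_weight noise uniform_map) uniform_map).

Lemma sample_weightE : @sample_weight L m q =1 sample_law.
Proof.
by case=> [[w s1] s2]; rewrite /sample_weight /pair_weight /ffun_weight /= !prodR_const_ord.
Qed.

Definition decoding_fails (b : L.-tuple bool) (t : m.-tuple bool) := g (xorv (f b) t) != b.

Lemma noise_section_error (b : L.-tuple bool) (s : 'I_6) :
  prob noise (fun w => decoding_fails b (w s)) <= eps.
Proof.
rewrite (prob_ffun_app (prob_bern_total q m) s (decoding_fails b)).
exact: decoding_error.
Qed.

Let noise_map_ge0 p : 0 <= pair_weight noise uniform_map p.
Proof. exact: Rmult_le_pos. Qed.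

Let sample_law_ge0 o : 0 <= sample_law o.
Proof. exact: Rmult_le_pos. Qed.

Let first_section_fails :
  prob sample_law (fun o => decoding_fails (bits l) (o.1.1 (inord 0))) <= eps.
Proof.
rewrite (prob_pair_fst _ (fun p : noise_vector * index_map =>
  decoding_fails (bits l) (p.1 (inord 0))) uniform_map_total).
rewrite (prob_pair_fst _ (fun w : noise_vector => decoding_fails (bits l) (w (inord 0)))
  uniform_map_total).
exact: noise_section_error.
Qed.

Let third_section_fails :
  prob sample_law (fun o => decoding_fails (bits (o.1.2 l)) (o.1.1 (inord 2))) <= eps.
Proof.
rewrite (prob_pair_fst _ (fun p : noise_vector * index_map =>
  decoding_fails (bits (p.2 l)) (p.1 (inord 2))) uniform_map_total).
rewrite prob_pairC -[eps]Rmult_1_r -uniform_map_total.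
by apply: prob_pair_le => // s1 /=; exact: noise_section_error.
Qed.

Let fifth_section_fails :
  prob sample_law (fun o => decoding_fails (bits (o.2 l)) (o.1.1 (inord 4))) <= eps.
Proof.
rewrite prob_pairC -[eps]Rmult_1_r -uniform_map_total.
apply: prob_pair_le => // s2.
rewrite (prob_pair_fst _ (fun w : noise_vector => decoding_fails (bits (s2 l)) (w (inord 4)))
  uniform_map_total).
exact: noise_section_error.
Qed.

Lemma prob_robust_rule_miss :
  prob (@sample_weight L m q) (fun o => robust_rule f g T x k o != Some l) <= 3 * eps.
Proof.
rewrite (eq_prob_weight _ sample_weightE).
pose miss0 (o : outcome) := decoding_fails (bits l) (o.1.1 (inord 0)).
pose miss2 (o : outcome) := decoding_fails (bits (o.1.2 l)) (o.1.1 (inord 2)).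
pose miss4 (o : outcome) := decoding_fails (bits (o.2 l)) (o.1.1 (inord 4)).
apply: Rle_trans (le_prob sample_law_ge0 (E' := fun o => miss0 o || miss2 o || miss4 o) _) _.
  case=> [[w s1] s2] miss; apply/negPn/negP => /=.
  move=> /norP [/norP [/negPn/eqP ok0 /negPn/eqP ok2] /negPn/eqP ok4].
  by rewrite (robust_rule_correct singleton ok0 ok2 ok4) eqxx in miss.
rewrite (_ : 3 * eps = eps + eps + eps); last ring.
apply: Rle_trans (prob_orb sample_law_ge0 _ _) _.
apply: Rplus_le_compat fifth_section_fails.
apply: Rle_trans (prob_orb sample_law_ge0 _ _) _.
exact: Rplus_le_compat first_section_fails third_section_fails.
Qed.

Definition misdecoded (w : noise_vector) (l1 : 'I_(2 ^ L)) :=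
  (l1 != l) && (decoded f g (bits l) (w (inord 0)) == Some l1).

Let misdecoded_uniq w l1 l1' : misdecoded w l1 -> misdecoded w l1' -> l1 = l1'.
Proof. by rewrite /misdecoded => /andP [_ /eqP ->] /andP [_ /eqP [->]]. Qed.

Let prob_misdecoded : prob noise (fun w => [exists l1, misdecoded w l1]) <= eps.
Proof.
apply: Rle_trans _ (noise_section_error (bits l) (inord 0)).
apply: (le_prob noise_ge0) => w /existsP [l1 /andP [l1_ne /eqP d0]]; apply/negP => /eqP ok.
by move: d0; rewrite /decoded ok idx_of_bits => -[l_eq]; rewrite l_eq eqxx in l1_ne.
Qed.

Definition index_consistent (s : index_map) (t : m.-tuple bool) (l1 : 'I_(2 ^ L)) :=
  Some (s l1) == decoded f g (bits (s l)) t.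

Definition wrong_passes_first_check (p : noise_vector * index_map) :=
  [exists l1, misdecoded p.1 l1 && index_consistent p.2 (p.1 (inord 2)) l1].

Definition wrong_passes_checks (o : outcome) :=
  [exists l1, (misdecoded o.1.1 l1 && index_consistent o.1.2 (o.1.1 (inord 2)) l1)
              && index_consistent o.2 (o.1.1 (inord 4)) l1].

Let prob_first_check (w : noise_vector) :
  prob uniform_map (fun s1 => wrong_passes_first_check (w, s1))
  <= if [exists l1, misdecoded w l1] then / INR (2 ^ L) else 0.
Proof.
rewrite /wrong_passes_first_check /index_consistent /=.
apply: (prob_unif_unique_hit n_gt0 (fun y => decoded f g (bits y) (w (inord 2)))).
  exact: misdecoded_uniq.
by rewrite /misdecoded eqxx.
Qed.

Let prob_second_check (p : noise_vector * index_map) :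
  prob uniform_map (fun s2 => wrong_passes_checks (p, s2))
  <= if wrong_passes_first_check p then / INR (2 ^ L) else 0.
Proof.
rewrite /wrong_passes_checks /wrong_passes_first_check /index_consistent /=.
apply: (prob_unif_unique_hit n_gt0 (fun y => decoded f g (bits y) (p.1 (inord 4)))).
  by move=> l1 l1' /andP [wl1 _] /andP [wl1' _]; exact: misdecoded_uniq wl1 wl1'.
by rewrite /misdecoded eqxx.
Qed.

Lemma prob_robust_rule_false :
  prob (@sample_weight L m q)
       (fun o => [exists l', (l' != l) && (robust_rule f g T x k o == Some l')])
    <= / INR (2 ^ L) * (/ INR (2 ^ L) * eps).
Proof.
rewrite (eq_prob_weight _ sample_weightE).
apply: Rle_trans (le_prob sample_law_ge0 (E' := wrong_passes_checks) _) _.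
  case=> [[w s1] s2] /existsP [l1 /andP [l1_ne /eqP /(robust_rule_Some singleton)]].
  case=> d0 d2 d4; apply/existsP; exists l1.
  by rewrite /misdecoded /index_consistent l1_ne d0 d2 d4 !eqxx.
apply: Rle_trans (prob_pair_le noise_map_ge0 prob_second_check) _.
apply: Rmult_le_compat_l inv_n_ge0 _.
apply: Rle_trans (prob_pair_le noise_ge0 prob_first_check) _.
exact: Rmult_le_compat_l inv_n_ge0 prob_misdecoded.
Qed.

End RobustSingletonRule.

Lemma Rpower_opp_add2 (a z : R) :
  0 < a -> Rpower a (- (2 + z)) = / a * (/ a * Rpower a (- z)).
Proof.
move=> a_gt0; rewrite Ropp_plus_distr Rpower_plus Rpower_Ropp.
rewrite (_ : 2 = INR 2) ?Rpower_pow //= Rmult_1_r Rinv_mult; ring.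
Qed.

Theorem lemma2
  (L m K M : nat) (q zeta : R)
  (f : L.-tuple bool -> m.-tuple bool) (g : m.-tuple bool -> L.-tuple bool)
  (T : 'I_M -> 'I_(2 ^ L) -> bool) (x : {set 'I_(2 ^ L)})
  (k : 'I_M) (l : 'I_(2 ^ L)) :
  0 < q < / 2 ->
  0 < zeta ->
  (forall b : L.-tuple bool,
     prob (@bern_weight q m) (fun w' => g (xorv (f b) w') != b)
       <= Rpower (INR (2 ^ L)%nat) (- zeta)) ->
  #|x| = K ->
  [set l' in x | T k l'] = [set l] ->
  prob (@sample_weight L m q) (fun o => robust_rule f g T x k o != Some l)
    <= 3 * Rpower (INR (2 ^ L)%nat) (- zeta)
  /\
  prob (@sample_weight L m q)
       (fun o => [exists l', (l' != l) && (robust_rule f g T x k o == Some l')])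
    <= Rpower (INR (2 ^ L)%nat) (- (2 + zeta)).
Proof.
move=> q_range _ decoding_error _ singleton; split.
  exact: prob_robust_rule_miss q_range singleton decoding_error.
rewrite Rpower_opp_add2; last by apply/lt_0_INR/ltP; rewrite expn_gt0.
exact: prob_robust_rule_false q_range singleton decoding_error.
Qed.
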